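(* Let $\mathcal{M}_H$ be a tetrahedral mesh of a polyhedral domain $\Omega\subset\mathbb{R}^3$ and $\mathcal{M}_h$ its uniform refinement (each tetrahedron split into eight by the edge midpoints, as in the standard regular refinement). For a mesh $\mathcal{M}$ let $$W(\mathcal{M})=\{v\in C^0(\overline\Omega): v|_K\in \mathbb{P}_2(K)\oplus\operatorname{span}\{b_{F}: F \text{ a face of } K\}\ \forall K\in\mathcal{M}\},$$ where for a face $F$ of $K$ with barycentric coordinates $\lambda_i,\lambda_j,\lambda_k$ of $K$ nonzero on $F$, $b_F=\lambda_i\lambda_j\lambda_k$ is the cubic face bubble. Let $E_H:W(\mathcal{M}_H)\to W(\mathcal{M}_h)$ be nodal interpolation at the degrees of freedom of $W(\mathcal{M}_h)$ (point values at the vertices, the edge midpoints, and the face barycenters of $\mathcal{M}_h$). Then for every $u_H\in W(\mathcal{M}_H)$ and every face $F$ of $\mathcal{M}_H$, $$(E_H u_H)|_F=u_H|_F,$$ in particular $\int_F E_Hu_H\,\mathrm{d}s=\int_F u_H\,\mathrm{d}s$ for every coarse face $F$ (and the same holds componentwise for vector fields in $[W(\mathcal{M}_H)]^3$, so normal fluxes across coarse faces are preserved).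
   Context: The space $W(\mathcal{M})$ is the continuous piecewise quadratic space enriched with cubic face bubbles (denoted $\mathbb{P}_2\oplus B^F_3$). Note that $W(\mathcal{M}_H)\not\subset W(\mathcal{M}_h)$ in general. *)

From Stdlib Require Import Reals List.
Import ListNotations.
Open Scope R_scope.

Record pt := Pt { px : R; py : R; pz : R }.

Definition padd (a b : pt) : pt := Pt (px a + px b) (py a + py b) (pz a + pz b).
Definition pscale (s : R) (a : pt) : pt := Pt (s * px a) (s * py a) (s * pz a).
Definition psub (a b : pt) : pt := padd a (pscale (-1) b).
Definition dist (a b : pt) : R :=
  sqrt ((px a - px b)^2 + (py a - py b)^2 + (pz a - pz b)^2).
Definition midpoint (a b : pt) : pt := pscale (1/2) (padd a b).
Definition barycenter3 (a b c : pt) : pt := pscale (1/3) (padd a (padd b c)).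

Record tet := Tet { v0 : pt; v1 : pt; v2 : pt; v3 : pt }.

Definition verts (K : tet) : list pt := [v0 K; v1 K; v2 K; v3 K].

Definition is_bary4 (l0 l1 l2 l3 : R) : Prop :=
  0 <= l0 /\ 0 <= l1 /\ 0 <= l2 /\ 0 <= l3 /\ l0 + l1 + l2 + l3 = 1.

Definition bary (K : tet) (l0 l1 l2 l3 : R) : pt :=
  padd (pscale l0 (v0 K)) (padd (pscale l1 (v1 K))
    (padd (pscale l2 (v2 K)) (pscale l3 (v3 K)))).

Definition in_tet (K : tet) (x : pt) : Prop :=
  exists l0 l1 l2 l3, is_bary4 l0 l1 l2 l3 /\ x = bary K l0 l1 l2 l3.

Definition in_tri (a b c : pt) (x : pt) : Prop :=
  exists l0 l1 l2, 0 <= l0 /\ 0 <= l1 /\ 0 <= l2 /\ l0 + l1 + l2 = 1 /\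
    x = padd (pscale l0 a) (padd (pscale l1 b) (pscale l2 c)).

Definition faces (K : tet) : list (pt * pt * pt) :=
  [(v1 K, v2 K, v3 K); (v0 K, v2 K, v3 K); (v0 K, v1 K, v3 K); (v0 K, v1 K, v2 K)].

Definition edges (K : tet) : list (pt * pt) :=
  [(v0 K, v1 K); (v0 K, v2 K); (v0 K, v3 K); (v1 K, v2 K); (v1 K, v3 K); (v2 K, v3 K)].

Definition det3 (a b c : pt) : R :=
  px a * (py b * pz c - pz b * py c)
  - py a * (px b * pz c - pz b * px c)
  + pz a * (px b * py c - py b * px c).

Definition nondegenerate (K : tet) : Prop :=
  det3 (psub (v1 K) (v0 K)) (psub (v2 K) (v0 K)) (psub (v3 K) (v0 K)) <> 0.

Fixpoint lincomb (w : list R) (l : list pt) : pt :=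
  match w, l with
  | a :: w', p :: l' => padd (pscale a p) (lincomb w' l')
  | _, _ => Pt 0 0 0
  end.

Definition in_hull (l : list pt) (x : pt) : Prop :=
  exists w : list R, length w = length l /\ Forall (fun a => 0 <= a) w /\
    fold_right Rplus 0 w = 1 /\ x = lincomb w l.

Definition in_hull_pred (P : pt -> Prop) (x : pt) : Prop :=
  exists l, Forall P l /\ in_hull l x.

(** A (conforming) tetrahedral mesh: nondegenerate tetrahedra such that two
    distinct elements intersect exactly in the convex hull of their common
    vertices (i.e. in the empty set, a common vertex, edge or face). *)
Definition is_mesh (M : list tet) : Prop :=
  (forall K, In K M -> nondegenerate K) /\
  (forall K1 K2, In K1 M -> In K2 M -> K1 <> K2 ->
     forall x, (in_tet K1 x /\ in_tet K2 x) <->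
               in_hull_pred (fun p => In p (verts K1) /\ In p (verts K2)) x).

Definition domain (M : list tet) (x : pt) : Prop := exists K, In K M /\ in_tet K x.

(** Regular (red) refinement of one tetrahedron into eight children:
    4 corner tetrahedra and the inner octahedron cut into 4 tetrahedra along
    one of its three diagonals (choice [diag]). *)
Inductive diag := D0 | D1 | D2.

Definition children (K : tet) (d : diag) : list tet :=
  let p0 := v0 K in let p1 := v1 K in let p2 := v2 K in let p3 := v3 K in
  let m01 := midpoint p0 p1 in let m02 := midpoint p0 p2 in
  let m03 := midpoint p0 p3 in let m12 := midpoint p1 p2 in
  let m13 := midpoint p1 p3 in let m23 := midpoint p2 p3 in
  let octa (a a' b c b' c' : pt) :=
      [Tet a a' b c; Tet a a' c b'; Tet a a' b' c'; Tet a a' c' b] in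
  [Tet p0 m01 m02 m03; Tet m01 p1 m12 m13; Tet m02 m12 p2 m23; Tet m03 m13 m23 p3]
  ++ match d with
     | D0 => octa m02 m13 m01 m03 m23 m12   (* Bey's standard diagonal *)
     | D1 => octa m01 m23 m02 m03 m13 m12
     | D2 => octa m03 m12 m01 m02 m23 m13
     end.

Definition is_uniform_refinement (MH Mh : list tet) : Prop :=
  exists d : tet -> diag,
    forall K', In K' Mh <-> exists K, In K MH /\ In K' (children K (d K)).

Definition P2eval (c : nat -> R) (x : pt) : R :=
  c 0%nat + c 1%nat * px x + c 2%nat * py x + c 3%nat * pz x
  + c 4%nat * px x ^ 2 + c 5%nat * py x ^ 2 + c 6%nat * pz x ^ 2
  + c 7%nat * (px x * py x) + c 8%nat * (px x * pz x) + c 9%nat * (py x * pz x).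

(** v|_K \in P_2(K) (+) span{b_F : F face of K}, where the face bubble of the
    face opposite vertex i is the product of the other three barycentric
    coordinates. *)
Definition local_space (K : tet) (v : pt -> R) : Prop :=
  exists (c : nat -> R) (d0 d1 d2 d3 : R),
    forall l0 l1 l2 l3, is_bary4 l0 l1 l2 l3 ->
      v (bary K l0 l1 l2 l3) =
        P2eval c (bary K l0 l1 l2 l3)
        + d0 * (l1 * l2 * l3) + d1 * (l0 * l2 * l3)
        + d2 * (l0 * l1 * l3) + d3 * (l0 * l1 * l2).

Definition cont_on (S : pt -> Prop) (v : pt -> R) : Prop :=
  forall x, S x -> forall eps, 0 < eps -> exists delta, 0 < delta /\
    forall y, S y -> dist x y < delta -> Rabs (v y - v x) < eps.

Definition W (M : list tet) (v : pt -> R) : Prop :=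
  cont_on (domain M) v /\ forall K, In K M -> local_space K v.

Definition is_node (M : list tet) (p : pt) : Prop :=
  exists K, In K M /\
    (In p (verts K)
     \/ (exists a b, In (a, b) (edges K) /\ p = midpoint a b)
     \/ (exists a b c, In (a, b, c) (faces K) /\ p = barycenter3 a b c)).

(* On a coarse face F the function u_H is a quadratic plus a multiple of the
   cubic bubble of F.  Red refinement splits F into four triangles whose edges
   are parallel to edges of F; composed with the affine parametrisation of such
   a triangle, a product of three barycentric coordinates has its cubic part
   proportional to s t (s + t), so u_H is again a quadratic plus a multiple of
   the bubble of the small triangle.  Each small triangle is a face of a fine
   element, on which E_H u_H lies in the same seven-dimensional space; both
   functions agree at the seven nodes of the small triangle (vertices, edge
   midpoints, barycenter), which are fine degrees of freedom and unisolvent for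
   that space. *)
From Stdlib Require Import Reals List Lra.
Import ListNotations.
Open Scope R_scope.

Lemma pt_eq p q : px p = px q -> py p = py q -> pz p = pz q -> p = q.
Proof. destruct p, q; simpl; intros; subst; reflexivity. Qed.

Definition P2b (g : R -> R -> R) : Prop :=
  exists A B C D E F G : R, forall s t,
    g s t = A + B*s + C*t + D*(s*s) + E*(t*t) + F*(s*t) + G*(s*t*(1-s-t)).

Definition affine2 (f : R -> R -> R) : Prop :=
  exists a b c : R, forall s t, f s t = a + b*s + c*t.

Definition aff (x y z s t : R) : R := x*(1-s-t) + y*s + z*t.

Lemma P2b_ext f g : (forall s t, f s t = g s t) -> P2b g -> P2b f.
Proof.
  intros Hfg (A&B&C&D&E&F&G&H).
  exists A, B, C, D, E, F, G; intros s t; rewrite Hfg; apply H.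
Qed.

Lemma P2b_const k : P2b (fun _ _ => k).
Proof. exists k, 0, 0, 0, 0, 0, 0; intros; ring. Qed.

Lemma P2b_add f g : P2b f -> P2b g -> P2b (fun s t => f s t + g s t).
Proof.
  intros (A&B&C&D&E&F&G&H) (A'&B'&C'&D'&E'&F'&G'&H').
  exists (A+A'), (B+B'), (C+C'), (D+D'), (E+E'), (F+F'), (G+G').
  intros s t; rewrite H, H'; ring.
Qed.

Lemma P2b_sub f g : P2b f -> P2b g -> P2b (fun s t => f s t - g s t).
Proof.
  intros (A&B&C&D&E&F&G&H) (A'&B'&C'&D'&E'&F'&G'&H').
  exists (A-A'), (B-B'), (C-C'), (D-D'), (E-E'), (F-F'), (G-G').
  intros s t; rewrite H, H'; ring.
Qed.

Lemma P2b_scale k f : P2b f -> P2b (fun s t => k * f s t).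
Proof.
  intros (A&B&C&D&E&F&G&H).
  exists (k*A), (k*B), (k*C), (k*D), (k*E), (k*F), (k*G).
  intros s t; rewrite H; ring.
Qed.

Lemma P2b_affine2 f : affine2 f -> P2b f.
Proof. intros (a&b&c&H); exists a, b, c, 0, 0, 0, 0; intros; rewrite H; ring. Qed.

Lemma P2b_affine2_mul f g : affine2 f -> affine2 g -> P2b (fun s t => f s t * g s t).
Proof.
  intros (a&b&c&H) (a'&b'&c'&H').
  exists (a*a'), (a*b'+b*a'), (a*c'+c*a'), (b*b'), (c*c'), (b*c'+c*b'), 0.
  intros s t; rewrite H, H'; ring.
Qed.

Lemma P2b_affine2_sqr f : affine2 f -> P2b (fun s t => f s t ^ 2).
Proof.
  intros Hf; apply (P2b_ext _ (fun s t => f s t * f s t)); [intros; ring|].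
  now apply P2b_affine2_mul.
Qed.

Lemma P2b_P2eval c (P : R -> R -> pt) :
  affine2 (fun s t => px (P s t)) -> affine2 (fun s t => py (P s t)) ->
  affine2 (fun s t => pz (P s t)) -> P2b (fun s t => P2eval c (P s t)).
Proof.
  intros HX HY HZ; unfold P2eval.
  repeat apply P2b_add; try apply P2b_const; apply P2b_scale;
    first [apply P2b_affine2_sqr | apply P2b_affine2_mul | apply P2b_affine2]; assumption.
Qed.

(* The cubic part of the product is the binary cubic form
   (b1 s + c1 t)(b2 s + c2 t)(b3 s + c3 t); the hypotheses say that it
   vanishes on the three lines s = 0, t = 0 and s + t = 0, hence equals
   X s t (s + t) = X s t - X s t (1 - s - t). *)
Lemma P2b_cubic_of_affine a1 b1 c1 a2 b2 c2 a3 b3 c3 :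
  b1*b2*b3 = 0 -> c1*c2*c3 = 0 -> (b1-c1)*(b2-c2)*(b3-c3) = 0 ->
  P2b (fun s t => (a1 + b1*s + c1*t) * (a2 + b2*s + c2*t) * (a3 + b3*s + c3*t)).
Proof.
  intros Hb Hc Hbc.
  set (X := b1*b2*c3 + b1*c2*b3 + c1*b2*b3).
  exists (a1*a2*a3), (b1*a2*a3 + a1*b2*a3 + a1*a2*b3), (c1*a2*a3 + a1*c2*a3 + a1*a2*c3),
    (b1*b2*a3 + b1*a2*b3 + a1*b2*b3), (c1*c2*a3 + c1*a2*c3 + a1*c2*c3),
    (b1*c2*a3 + c1*b2*a3 + b1*a2*c3 + c1*a2*b3 + a1*b2*c3 + a1*c2*b3 + X), (- X).
  intros s t; apply Rminus_diag_uniq.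
  transitivity ((b1*b2*b3) * s^3 + (c1*c2*c3) * t^3
                + ((b1-c1)*(b2-c2)*(b3-c3) - b1*b2*b3 + c1*c2*c3) * (s*t^2)).
  - unfold X; ring.
  - rewrite Hb, Hc, Hbc; ring.
Qed.

Lemma P2b_aff_cubic x1 y1 z1 x2 y2 z2 x3 y3 z3 :
  (y1-x1)*(y2-x2)*(y3-x3) = 0 -> (z1-x1)*(z2-x2)*(z3-x3) = 0 ->
  (y1-z1)*(y2-z2)*(y3-z3) = 0 ->
  P2b (fun s t => aff x1 y1 z1 s t * aff x2 y2 z2 s t * aff x3 y3 z3 s t).
Proof.
  intros Hy Hz Hyz.
  apply (P2b_ext _ (fun s t => (x1 + (y1-x1)*s + (z1-x1)*t) * (x2 + (y2-x2)*s + (z2-x2)*t)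
                               * (x3 + (y3-x3)*s + (z3-x3)*t))).
  { intros; unfold aff; ring. }
  apply P2b_cubic_of_affine; [exact Hy | exact Hz |].
  rewrite <- Hyz; ring.
Qed.

Lemma P2b_unisolvent g : P2b g ->
  g 0 0 = 0 -> g 1 0 = 0 -> g 0 1 = 0 -> g (1/2) 0 = 0 -> g 0 (1/2) = 0 ->
  g (1/2) (1/2) = 0 -> g (1/3) (1/3) = 0 -> forall s t, g s t = 0.
Proof.
  intros (A&B&C&D&E&F&G&H) H1 H2 H3 H4 H5 H6 H7 s t.
  rewrite H in H1, H2, H3, H4, H5, H6, H7 |- *.
  assert (A = 0) by lra.
  assert (B = 0 /\ D = 0) as [? ?] by lra.
  assert (C = 0 /\ E = 0) as [? ?] by lra.
  assert (F = 0) by lra.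
  assert (G = 0) by lra.
  subst; ring.
Qed.

Definition tri_pt (a b c : pt) (s t : R) : pt :=
  padd (pscale (1-s-t) a) (padd (pscale s b) (pscale t c)).

Definition tri_nodes (a b c : pt) : list pt :=
  [a; b; c; midpoint a b; midpoint a c; midpoint b c; barycenter3 a b c].

Definition P2b_on_tri (f : R -> R -> R) : Prop :=
  exists g, P2b g /\ forall s t, 0 <= s -> 0 <= t -> s + t <= 1 -> f s t = g s t.

Lemma tri_pt_nodes a b c :
  tri_pt a b c 0 0 = a /\ tri_pt a b c 1 0 = b /\ tri_pt a b c 0 1 = c /\
  tri_pt a b c (1/2) 0 = midpoint a b /\ tri_pt a b c 0 (1/2) = midpoint a c /\
  tri_pt a b c (1/2) (1/2) = midpoint b c /\ tri_pt a b c (1/3) (1/3) = barycenter3 a b c.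
Proof. repeat split; apply pt_eq; simpl; field. Qed.

Lemma agree_on_tri (u w : pt -> R) a b c :
  P2b_on_tri (fun s t => u (tri_pt a b c s t)) ->
  P2b_on_tri (fun s t => w (tri_pt a b c s t)) ->
  (forall p, In p (tri_nodes a b c) -> u p = w p) ->
  forall x, in_tri a b c x -> u x = w x.
Proof.
  intros (gu & Hgu & Hu) (gw & Hgw & Hw) Hnodes x (l & s & t & Hl & Hs & Ht & Hsum & ->).
  destruct (tri_pt_nodes a b c) as (Ea & Eb & Ec & Eab & Eac & Ebc & Eabc).
  assert (Hdiff : forall s t, gu s t - gw s t = 0).
  { apply P2b_unisolvent; [now apply P2b_sub | ..].
    all: rewrite <- Hu, <- Hw by lra; rewrite ?Ea, ?Eb, ?Ec, ?Eab, ?Eac, ?Ebc, ?Eabc.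
    all: apply Rminus_diag_eq, Hnodes; simpl; tauto. }
  replace l with (1 - s - t) by lra; fold (tri_pt a b c s t).
  rewrite Hu, Hw by lra; apply Rminus_diag_uniq, Hdiff.
Qed.

Lemma in_tri_red_split a b c x : in_tri a b c x ->
  in_tri a (midpoint a b) (midpoint a c) x \/ in_tri (midpoint a b) b (midpoint b c) x \/
  in_tri (midpoint a c) (midpoint b c) c x \/
  in_tri (midpoint a b) (midpoint a c) (midpoint b c) x.
Proof.
  intros (l0 & l1 & l2 & H0 & H1 & H2 & Hs & ->).
  destruct (Rle_lt_dec (1/2) l0); [left | right; destruct (Rle_lt_dec (1/2) l1);
    [left | right; destruct (Rle_lt_dec (1/2) l2); [left | right]]].
  - exists (2*l0-1), (2*l1), (2*l2); repeat split; try lra;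
    apply pt_eq; simpl; replace l0 with (1 - l1 - l2) by lra; field.
  - exists (2*l0), (2*l1-1), (2*l2); repeat split; try lra;
    apply pt_eq; simpl; replace l0 with (1 - l1 - l2) by lra; field.
  - exists (2*l0), (2*l1), (2*l2-1); repeat split; try lra;
    apply pt_eq; simpl; replace l0 with (1 - l1 - l2) by lra; field.
  - exists (1-2*l2), (1-2*l1), (1-2*l0); repeat split; try lra;
    apply pt_eq; simpl; replace l0 with (1 - l1 - l2) by lra; field.
Qed.

Lemma in_tri_rot {a b c x} : in_tri a b c x -> in_tri b c a x.
Proof.
  intros (l0 & l1 & l2 & ? & ? & ? & ? & ->); exists l1, l2, l0.
  repeat split; try lra; apply pt_eq; simpl; ring.
Qed.

Lemma in_tri_swap {a b c x} : in_tri a b c x -> in_tri b a c x.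
Proof.
  intros (l0 & l1 & l2 & ? & ? & ? & ? & ->); exists l1, l0, l2.
  repeat split; try lra; apply pt_eq; simpl; ring.
Qed.

Record bcoord := BC { b0 : R; b1 : R; b2 : R; b3 : R }.

Definition bpt (K : tet) (p : bcoord) : pt := bary K (b0 p) (b1 p) (b2 p) (b3 p).

Definition is_bc (p : bcoord) : Prop := is_bary4 (b0 p) (b1 p) (b2 p) (b3 p).

(* Every product of three components of q - p vanishes, i.e. at most two are
   nonzero: the segment pq is parallel to an edge of the tetrahedron. *)
Definition aligned (p q : bcoord) : Prop :=
  (b1 q - b1 p) * (b2 q - b2 p) * (b3 q - b3 p) = 0 /\
  (b0 q - b0 p) * (b2 q - b2 p) * (b3 q - b3 p) = 0 /\
  (b0 q - b0 p) * (b1 q - b1 p) * (b3 q - b3 p) = 0 /\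
  (b0 q - b0 p) * (b1 q - b1 p) * (b2 q - b2 p) = 0.

Definition aligned_tri (K : tet) (a b c : pt) : Prop :=
  exists p q r : bcoord, a = bpt K p /\ b = bpt K q /\ c = bpt K r /\
    is_bc p /\ is_bc q /\ is_bc r /\ aligned p q /\ aligned p r /\ aligned r q.

Definition bcomb (p q r : bcoord) (s t : R) : bcoord :=
  BC (aff (b0 p) (b0 q) (b0 r) s t) (aff (b1 p) (b1 q) (b1 r) s t)
     (aff (b2 p) (b2 q) (b2 r) s t) (aff (b3 p) (b3 q) (b3 r) s t).

Definition bmid (p q : bcoord) : bcoord :=
  BC ((b0 p + b0 q) / 2) ((b1 p + b1 q) / 2) ((b2 p + b2 q) / 2) ((b3 p + b3 q) / 2).

Lemma v0_bpt K : v0 K = bpt K (BC 1 0 0 0). Proof. apply pt_eq; simpl; ring. Qed.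
Lemma v1_bpt K : v1 K = bpt K (BC 0 1 0 0). Proof. apply pt_eq; simpl; ring. Qed.
Lemma v2_bpt K : v2 K = bpt K (BC 0 0 1 0). Proof. apply pt_eq; simpl; ring. Qed.
Lemma v3_bpt K : v3 K = bpt K (BC 0 0 0 1). Proof. apply pt_eq; simpl; ring. Qed.

Lemma midpoint_bpt K p q : midpoint (bpt K p) (bpt K q) = bpt K (bmid p q).
Proof. apply pt_eq; simpl; field. Qed.

Lemma tri_pt_bpt K p q r s t :
  tri_pt (bpt K p) (bpt K q) (bpt K r) s t = bpt K (bcomb p q r s t).
Proof. apply pt_eq; simpl; unfold aff; ring. Qed.

Lemma is_bc_bcomb p q r s t : is_bc p -> is_bc q -> is_bc r ->
  0 <= s -> 0 <= t -> s + t <= 1 -> is_bc (bcomb p q r s t).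
Proof.
  unfold is_bc, is_bary4; simpl; unfold aff.
  intros (?&?&?&?&Hp) (?&?&?&?&Hq) (?&?&?&?&Hr) Hs Ht Hst.
  repeat split; try (repeat apply Rplus_le_le_0_compat; apply Rmult_le_pos; lra).
  transitivity ((1-s-t) * (b0 p + b1 p + b2 p + b3 p) + s * (b0 q + b1 q + b2 q + b3 q)
                + t * (b0 r + b1 r + b2 r + b3 r)); [ring | rewrite Hp, Hq, Hr; ring].
Qed.

Lemma affine2_aff_comb x0 y0 z0 x1 y1 z1 x2 y2 z2 x3 y3 z3 w0 w1 w2 w3 :
  affine2 (fun s t => aff x0 y0 z0 s t * w0
    + (aff x1 y1 z1 s t * w1 + (aff x2 y2 z2 s t * w2 + aff x3 y3 z3 s t * w3))).
Proof.
  exists (x0*w0 + x1*w1 + x2*w2 + x3*w3),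
    ((y0-x0)*w0 + (y1-x1)*w1 + (y2-x2)*w2 + (y3-x3)*w3),
    ((z0-x0)*w0 + (z1-x1)*w1 + (z2-x2)*w2 + (z3-x3)*w3).
  intros; unfold aff; ring.
Qed.

Lemma local_space_on_aligned_tri K v a b c :
  local_space K v -> aligned_tri K a b c ->
  P2b_on_tri (fun s t => v (tri_pt a b c s t)).
Proof.
  intros (cP & d0 & d1 & d2 & d3 & Hv)
    (p & q & r & -> & -> & -> & Hp & Hq & Hr & Hpq & Hpr & Hrq).
  exists (fun s t => P2eval cP (bpt K (bcomb p q r s t))
    + d0 * (aff (b1 p) (b1 q) (b1 r) s t * aff (b2 p) (b2 q) (b2 r) s t
            * aff (b3 p) (b3 q) (b3 r) s t)
    + d1 * (aff (b0 p) (b0 q) (b0 r) s t * aff (b2 p) (b2 q) (b2 r) s t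
            * aff (b3 p) (b3 q) (b3 r) s t)
    + d2 * (aff (b0 p) (b0 q) (b0 r) s t * aff (b1 p) (b1 q) (b1 r) s t
            * aff (b3 p) (b3 q) (b3 r) s t)
    + d3 * (aff (b0 p) (b0 q) (b0 r) s t * aff (b1 p) (b1 q) (b1 r) s t
            * aff (b2 p) (b2 q) (b2 r) s t)).
  split.
  - destruct Hpq as (?&?&?&?), Hpr as (?&?&?&?), Hrq as (?&?&?&?).
    do 4 (apply P2b_add; [| apply P2b_scale, P2b_aff_cubic; assumption]).
    apply P2b_P2eval; simpl; apply affine2_aff_comb.
  - intros s t Hs Ht Hst.
    rewrite tri_pt_bpt; unfold bpt at 1; rewrite Hv; [reflexivity |].
    now apply is_bc_bcomb.
Qed.

Ltac bpt_node :=
  rewrite ?v0_bpt, ?v1_bpt, ?v2_bpt, ?v3_bpt; first [reflexivity | apply midpoint_bpt].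

Ltac solve_aligned_tri :=
  do 3 eexists; split; [bpt_node | split; [bpt_node | split; [bpt_node |]]];
  unfold is_bc, is_bary4, aligned; cbn; repeat split; lra.

Lemma faces_aligned K a b c : In (a, b, c) (faces K) -> aligned_tri K a b c.
Proof.
  simpl; intros [H|[H|[H|[H|[]]]]]; injection H as <- <- <-; solve_aligned_tri.
Qed.

Lemma face_in_verts_edges K a b c : In (a, b, c) (faces K) ->
  In a (verts K) /\ In b (verts K) /\ In c (verts K) /\
  In (a, b) (edges K) /\ In (a, c) (edges K) /\ In (b, c) (edges K).
Proof.
  simpl; intros [H|[H|[H|[H|[]]]]]; injection H as <- <- <-;
    repeat split; simpl; tauto.
Qed.

Lemma face_nodes M K a b c p :
  In K M -> In (a, b, c) (faces K) -> In p (tri_nodes a b c) -> is_node M p.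
Proof.
  intros HK Hf Hp; exists K; split; [exact HK |].
  destruct (face_in_verts_edges K a b c Hf) as (Ha & Hb & Hc & Hab & Hac & Hbc).
  simpl in Hp; destruct Hp as [<-|[<-|[<-|[<-|[<-|[<-|[<-|[]]]]]]]].
  1-3: now left.
  - right; left; now exists a, b.
  - right; left; now exists a, c.
  - right; left; now exists b, c.
  - right; right; now exists a, b, c.
Qed.

Ltac exists_in_list tac :=
  first [ apply Exists_cons_hd; tac | apply Exists_cons_tl; exists_in_list tac ].

Ltac in_tri_permuted H :=
  first [ exact H | exact (in_tri_rot H) | exact (in_tri_rot (in_tri_rot H))
        | exact (in_tri_swap H) | exact (in_tri_rot (in_tri_swap H))
        | exact (in_tri_rot (in_tri_rot (in_tri_swap H))) ].

(* Each red-refinement triangle of a face of K is a face of a child of K: the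
   three corner triangles of corner children, the middle one of one of the
   four tetrahedra cut from the inner octahedron (which one depends on d). *)
Lemma children_cover_face K d a b c x :
  In (a, b, c) (faces K) -> in_tri a b c x ->
  exists K' a' b' c', In K' (children K d) /\ In (a', b', c') (faces K') /\
    in_tri a' b' c' x /\ aligned_tri K a' b' c'.
Proof.
  intros Hf Hx.
  enough (H : Exists (fun K' => Exists (fun f : pt * pt * pt =>
            let '(a', b', c') := f in in_tri a' b' c' x /\ aligned_tri K a' b' c')
            (faces K')) (children K d)).
  { apply Exists_exists in H as (K' & HK' & H).
    apply Exists_exists in H as ([[a' b'] c'] & Hf' & Hx' & Hal).
    exists K', a', b', c'; tauto. }
  simpl in Hf; destruct Hf as [Hf|[Hf|[Hf|[Hf|[]]]]]; injection Hf as <- <- <-;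
  destruct (in_tri_red_split _ _ _ _ Hx) as [Hs|[Hs|[Hs|Hs]]]; clear Hx;
  destruct d; cbv beta iota zeta delta [children app];
  exists_in_list ltac:(unfold faces;
    exists_in_list ltac:(cbn; split; [in_tri_permuted Hs | solve_aligned_tri])).
Qed.

Theorem mainTheorem3 :
  forall (MH Mh : list tet),
    is_mesh MH ->
    is_uniform_refinement MH Mh ->
    forall (uH : pt -> R), W MH uH ->
    forall (EuH : pt -> R), W Mh EuH ->
      (forall p, is_node Mh p -> EuH p = uH p) ->
      forall K, In K MH ->
      forall a b c, In (a, b, c) (faces K) ->
      forall x, in_tri a b c x -> EuH x = uH x.
Proof.
  intros MH Mh _ [d Href] uH [_ HuH] EuH [_ HEuH] Hnode K HK a b c Hf x Hx.
  destruct (children_cover_face K (d K) a b c x Hf Hx)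
    as (K' & a' & b' & c' & HK' & Hf' & Hx' & Hal).
  assert (HK'h : In K' Mh) by (apply Href; exists K; auto).
  apply (agree_on_tri EuH uH a' b' c'); [| | | exact Hx'].
  - apply (local_space_on_aligned_tri K'); [now apply HEuH | now apply faces_aligned].
  - apply (local_space_on_aligned_tri K); [now apply HuH | exact Hal].
  - intros p Hp; apply Hnode, (face_nodes Mh K' a' b' c'); assumption.
Qed.
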